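(* Let $d \ge 1$ and let $\beta=(\beta_1,\ldots,\beta_{d+1})$ be an optimal solution of the problem of minimizing $\beta_1\cdots\beta_d$ over all $(\beta_1,\dots,\beta_{d+1}) \in \mathbb{R}^{d+1}$ satisfying $\beta_1 \ge \cdots \ge \beta_{d+1} \ge 0$, $\beta_1+\cdots+\beta_{d+1}=1$, and, for every $t \in \{1,\dots,d\}$, \[ \mathrm{PS}(t):\quad \prod_{i=1}^t (\beta_i - \beta_{d+1}) \le \sum_{j=t+1}^{d+1} (\beta_j - \beta_{d+1}) + (d+1)\beta_{d+1}. \] Then there exists $\ell \in \{0,\ldots,d\}$ such that (a) $\beta_t = \beta_{t+1}$ for every $t$ with $\ell+1 \le t \le d$, and (b) $\mathrm{PS}(t)$ holds with equality for every $t$ with $1 \le t \le \ell-1$. *)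

From mathcomp Require Import all_boot all_order all_algebra.
Set Implicit Arguments. Unset Strict Implicit. Unset Printing Implicit Defensive.
Import Order.TTheory GRing.Theory Num.Theory.
Local Open Scope ring_scope.

(* A point beta of R^{d+1} is represented as b : nat -> R, with
   beta_i = b i for 1 <= i <= d+1; values outside 1..d+1 are irrelevant. *)

Definition PS_lhs {R : realFieldType} (d : nat) (b : nat -> R) (t : nat) : R :=
  \prod_(1 <= i < t.+1) (b i - b d.+1).
Definition PS_rhs {R : realFieldType} (d : nat) (b : nat -> R) (t : nat) : R :=
  \sum_(t.+1 <= j < d.+2) (b j - b d.+1) + d.+1%:R * b d.+1.
Definition PS {R : realFieldType} (d : nat) (b : nat -> R) (t : nat) : Prop :=
  PS_lhs d b t <= PS_rhs d b t.

Definition feasible {R : realFieldType} (d : nat) (b : nat -> R) : Prop :=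
  (forall i, (1 <= i <= d)%N -> b i.+1 <= b i) /\
  0 <= b d.+1 /\
  \sum_(1 <= i < d.+2) b i = 1 /\
  (forall t, (1 <= t <= d)%N -> PS d b t).

Definition objective {R : realFieldType} (d : nat) (b : nat -> R) : R :=
  \prod_(1 <= i < d.+1) b i.

Definition optimal {R : realFieldType} (d : nat) (b : nat -> R) : Prop :=
  feasible d b /\ forall b' : nat -> R, feasible d b' -> objective d b <= objective d b'.

From mathcomp Require Import all_boot all_order all_algebra.
From mathcomp Require Import reals.
From mathcomp Require Import zify ring lra.
Set Implicit Arguments. Unset Strict Implicit. Unset Printing Implicit Defensive.
Import Order.TTheory GRing.Theory Num.Theory.
Local Open Scope ring_scope.

(* Let c = b_(d+1) and let m be the first index with b_m = c; take l = m - 1,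
   so that (a) holds because b is nonincreasing.  For (b), suppose PS(t) is
   slack for some t < m - 1.  The slack rhs(s) - lhs(s) is nonnegative and, on
   every run where b is constant, concave in s; hence it stays positive from
   the start p of the run of b_t to the end q of the run of b_(t+1).  Moving a
   small e > 0 from b_q to b_p keeps b sorted with the same sum, leaves PS(s)
   unchanged for s < p, uses less than the slack for p <= s < q, and only
   decreases lhs(s) for s >= q.  But it lowers b_p b_q, hence the objective,
   which is positive because every feasible point has b_(d+1) > 0. *)

Lemma big_nat_update (T : Type) (idx : T) (op : Monoid.com_law idx)
    m n j (F G : nat -> T) :
  (m <= j < n)%N -> (forall i, i != j -> G i = F i) ->
  op (\big[op/idx]_(m <= i < n) G i) (F j) =
  op (G j) (\big[op/idx]_(m <= i < n) F i).
Proof.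
move=> jmn GF; rewrite !(bigD1_seq j) ?mem_index_iota ?iota_uniq //.
rewrite (eq_bigr F) => [|i /GF //].
by rewrite -Monoid.mulmA Monoid.mulmC.
Qed.

Lemma nondecn_segment_le (R : numDomainType) (g : nat -> R) m n :
  (m <= n)%N -> (forall k, (m <= k < n)%N -> g k <= g k.+1) -> g m <= g n.
Proof.
move=> mn g_incr; rewrite -subr_ge0 -telescope_sumr // big_nat.
by apply: sumr_ge0 => k /g_incr; rewrite subr_ge0.
Qed.

Lemma exists_pos_minorant (R : realDomainType) (x : R) (f : nat -> R) m n :
  0 < x -> (forall s, (m <= s < n)%N -> 0 < f s) ->
  exists2 e, 0 < e /\ e <= x & forall s, (m <= s < n)%N -> e <= f s.
Proof.
move=> x_gt0 f_gt0; exists (\big[Order.min/x]_(m <= s < n) f s).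
  split; last exact: bigmin_le_id.
  by rewrite big_nat; apply: lt_bigmin.
by move=> s smn; apply: ge_bigmin_seq; rewrite ?mem_index_iota.
Qed.

Section DiscreteConcavity.
Variables (R : realDomainType) (g : nat -> R) (u w : nat).
Hypothesis g_concave :
  forall s, (u <= s)%N -> (s.+2 <= w)%N -> g s.+2 - g s.+1 <= g s.+1 - g s.

Lemma concave_diff_le i j :
  (u <= i <= j)%N -> (j < w)%N -> g j.+1 - g j <= g i.+1 - g i.
Proof.
elim: j => [|j IH] /andP[ui ij] jw; first by have -> : i = 0%N by lia.
have [->|ij'] := eqVneq i j.+1; first exact: lexx.
apply: le_trans (g_concave (s := j) _ _) (IH _ _); lia.
Qed.

Lemma concave_ge0_gt0 t s :
  (forall k, (u <= k <= w)%N -> 0 <= g k) ->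
  (u <= t <= w)%N -> 0 < g t -> (u < s < w)%N -> 0 < g s.
Proof.
move=> g_ge0 utw gt_gt0 usw; rewrite ltNge; apply/negP => gs_le0.
have [ts|st] := ltnP t s.
- have slope_ge0 : 0 <= g s.+1 - g s.
    by rewrite subr_ge0 (le_trans gs_le0) ?g_ge0 //; lia.
  suff : g t <= g s by lra.
  apply: nondecn_segment_le (ltnW ts) _ => k tks.
  by rewrite -subr_ge0 (le_trans slope_ge0) ?concave_diff_le //; lia.
- case: s usw gs_le0 st => [|s] usw gs_le0 st; first lia.
  have slope_le0 : g s.+1 - g s <= 0.
    by rewrite subr_le0 (le_trans gs_le0) ?g_ge0 //; lia.
  suff : - g s.+1 <= - g t by lra.
  apply: (@nondecn_segment_le _ (fun k => - g k)) st _ => k sk.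
  by rewrite lerN2 -subr_le0 (le_trans _ slope_le0) ?concave_diff_le //; lia.
Qed.

End DiscreteConcavity.

Section PSAlgebra.
Variables (R : realFieldType) (d : nat) (b : nat -> R).

Definition PS_slack t := PS_rhs d b t - PS_lhs d b t.

Lemma PS_lhs0 : PS_lhs d b 0 = 1.
Proof. by rewrite /PS_lhs big_geq. Qed.

Lemma PS_lhsS t : PS_lhs d b t.+1 = PS_lhs d b t * (b t.+1 - b d.+1).
Proof. by rewrite /PS_lhs big_nat_recr. Qed.

Lemma PS_rhsS t : (t <= d)%N ->
  PS_rhs d b t = (b t.+1 - b d.+1) + PS_rhs d b t.+1.
Proof. by move=> td; rewrite /PS_rhs big_ltn ?ltnS // addrA. Qed.

Lemma PS_rhs0 : \sum_(1 <= i < d.+2) b i = 1 -> PS_rhs d b 0 = 1.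
Proof.
move=> sum_b; rewrite /PS_rhs sumrB sum_b sumr_const_nat subSS subn0.
by rewrite mulr_natl subrK.
Qed.

(* The second difference of the slack at t is - lhs(t) (1 - x)^2, where
   x = b_(t+1) - b_(d+1) = b_(t+2) - b_(d+1). *)
Lemma PS_slack_concave t : (t < d)%N -> b t.+1 = b t.+2 ->
  0 <= PS_lhs d b t ->
  PS_slack t.+2 - PS_slack t.+1 <= PS_slack t.+1 - PS_slack t.
Proof.
move=> td b_eq lhs_ge0; rewrite /PS_slack (@PS_rhsS t (ltnW td)) (@PS_rhsS t.+1 td).
rewrite !PS_lhsS b_eq; set x := b t.+2 - b d.+1.
have : 0 <= PS_lhs d b t * (1 - x) ^+ 2 by rewrite mulr_ge0 ?sqr_ge0.
by rewrite expr2; nra.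
Qed.

End PSAlgebra.

Section Feasible.
Variables (R : realFieldType) (d : nat) (b : nat -> R).
Hypothesis b_feas : feasible d b.

Lemma feasible_le i j : (1 <= i <= j)%N -> (j <= d.+1)%N -> b j <= b i.
Proof.
case: b_feas => b_sorted _ /andP[i1 ij] jd.
rewrite -lerN2; apply: (@nondecn_segment_le _ (fun k => - b k)) ij _ => k ikj.
by rewrite lerN2 b_sorted //; lia.
Qed.

Lemma feasible_PS t : (t <= d)%N -> PS d b t.
Proof.
case: b_feas => _ [_ [sum_b b_PS]]; case: t => [_|t td]; last by apply: b_PS; lia.
by rewrite /PS PS_lhs0 PS_rhs0.
Qed.

Lemma PS_lhs_ge0 t : (t <= d.+1)%N -> 0 <= PS_lhs d b t.
Proof.
move=> td; rewrite /PS_lhs big_nat; apply: prodr_ge0 => i it.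
by rewrite subr_ge0 feasible_le //; lia.
Qed.

Lemma PS_slack_ge0 t : (t <= d)%N -> 0 <= PS_slack d b t.
Proof. by move=> td; rewrite subr_ge0 feasible_PS. Qed.

Lemma feasible_plateau : exists m, [/\ (1 <= m <= d.+1)%N,
  forall i, (m <= i <= d.+1)%N -> b i = b d.+1 &
  forall i, (1 <= i < m)%N -> b d.+1 < b i].
Proof.
have last_in : exists i, (0 < i)%N && (b i == b d.+1) by exists d.+1; rewrite eqxx.
case: (ex_minnP last_in) => m /andP[m_gt0 /eqP bm] m_min.
have md : (m <= d.+1)%N by apply: m_min; rewrite eqxx.
exists m; split => [|i /andP[mi id]|i /andP[i1 im]]; first by rewrite m_gt0.
- apply/eqP; rewrite eq_le -{1}bm.
  by rewrite (feasible_le (i := m)) ?(feasible_le (j := d.+1)) //; lia.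
- rewrite lt_neqAle feasible_le ?i1 ?andbT //; last by lia.
  by apply: contraTneq im => bi; rewrite -leqNgt m_min // bi eqxx; lia.
Qed.

(* With m the start of the plateau of b_(d+1), PS(m-1) has a positive left side
   and right side (d+1) b_(d+1). *)
Lemma feasible_last_gt0 : 0 < b d.+1.
Proof.
have [m [/andP[m1 md] b_plateau b_above]] := feasible_plateau.
have lhs_gt0 : 0 < PS_lhs d b m.-1.
  rewrite /PS_lhs big_nat; apply: prodr_gt0 => i im.
  by rewrite subr_gt0 b_above //; lia.
have rhs_eq : PS_rhs d b m.-1 = d.+1%:R * b d.+1.
  rewrite /PS_rhs big_nat big1 ?add0r // => i mi.
  by rewrite b_plateau ?subrr //; lia.
have PS_m : PS d b m.-1 by apply: feasible_PS; lia.
by have := lt_le_trans lhs_gt0 PS_m; rewrite rhs_eq pmulr_rgt0.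
Qed.

Lemma feasible_gt0 i : (1 <= i <= d.+1)%N -> 0 < b i.
Proof.
by move=> /andP[i1 id]; rewrite (lt_le_trans feasible_last_gt0) ?feasible_le ?i1.
Qed.

Lemma feasible_block_start t : (1 <= t <= d.+1)%N -> exists p,
  [/\ (1 <= p <= t)%N, (1 < p)%N -> b p < b p.-1 &
       forall i, (p <= i <= t)%N -> b i = b t].
Proof.
move=> /andP[t1 td].
have t_in : exists i, (0 < i)%N && (b i == b t) by exists t; rewrite t1 eqxx.
case: (ex_minnP t_in) => p /andP[p_gt0 /eqP bp] p_min.
have pt : (p <= t)%N by apply: p_min; rewrite t1 eqxx.
exists p; split => [|p_gt1|i /andP[pi it]]; first by rewrite p_gt0.
- rewrite lt_neqAle feasible_le ?andbT; try lia.
  by apply/eqP => bp1; have := p_min p.-1; rewrite -bp1 bp eqxx andbT; lia.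
- apply/eqP; rewrite eq_le -{1}bp.
  by rewrite (feasible_le (i := p)) ?(feasible_le (j := t)) //; lia.
Qed.

Lemma feasible_block_end s : (1 <= s <= d.+1)%N -> b d.+1 < b s -> exists q,
  [/\ (s <= q <= d)%N, b q.+1 < b q & forall i, (s <= i <= q)%N -> b i = b q].
Proof.
move=> /andP[s1 sd] c_lt_bs.
have s_in : exists i, (i <= d.+1)%N && (b i == b s) by exists s; rewrite sd eqxx.
have bounded : forall i, (i <= d.+1)%N && (b i == b s) -> (i <= d.+1)%N.
  by move=> i /andP[].
case: (ex_maxnP s_in bounded) => q /andP[qd /eqP bq] q_max.
have sq : (s <= q)%N by apply: q_max; rewrite sd eqxx.
have q_ne_last : q != d.+1 by apply: contraTneq c_lt_bs => q_last; rewrite -bq q_last ltxx.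
exists q; split => [|//|i /andP[si iq]]; first by rewrite sq; lia.
- rewrite lt_neqAle feasible_le ?andbT; try lia.
  by apply/eqP => bq1; have := q_max q.+1; rewrite bq1 bq eqxx andbT; lia.
- apply/eqP; rewrite eq_le bq -{2}bq.
  by rewrite (feasible_le (i := s)) ?(feasible_le (j := q)) //; lia.
Qed.

Lemma PS_slack_concave_on u w : (w <= d)%N ->
  (forall i, (u < i <= w)%N -> b i = b w) ->
  forall s, (u <= s)%N -> (s.+2 <= w)%N ->
  PS_slack d b s.+2 - PS_slack d b s.+1 <= PS_slack d b s.+1 - PS_slack d b s.
Proof.
move=> wd b_const s us sw; apply: PS_slack_concave; first by lia.
  by rewrite !b_const //; lia.
by apply: PS_lhs_ge0; lia.
Qed.

Lemma PS_slack_gt0_blocks p t q :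
  (1 <= p <= t)%N -> (t < q <= d)%N ->
  (forall i, (p <= i <= t)%N -> b i = b t) ->
  (forall i, (t < i <= q)%N -> b i = b q) ->
  0 < PS_slack d b t -> forall s, (p <= s < q)%N -> 0 < PS_slack d b s.
Proof.
move=> /andP[p1 pt] /andP[tq qd] b_left b_right slack_t s /andP[ps sq].
have [st|ts|->] := ltngtP s t; last done.
- apply: (concave_ge0_gt0 (u := p.-1) (w := t) _ _ _ slack_t); try lia.
  + by apply: PS_slack_concave_on; [lia | move=> i ?; apply: b_left; lia].
  + by move=> k ?; apply: PS_slack_ge0; lia.
- apply: (concave_ge0_gt0 (u := t) (w := q) _ _ _ slack_t); try lia.
  + by apply: PS_slack_concave_on.
  + by move=> k ?; apply: PS_slack_ge0; lia.
Qed.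

End Feasible.

Section Bump.
Variables (R : comPzRingType) (b : nat -> R) (j : nat) (x : R).

Definition bump i := if i == j then b i + x else b i.

Lemma bump_at : bump j = b j + x.
Proof. by rewrite /bump eqxx. Qed.

Lemma bump_off i : i != j -> bump i = b i.
Proof. by rewrite /bump => /negPf->. Qed.

Lemma sum_bump m n c :
  \sum_(m <= i < n) (bump i - c) =
  \sum_(m <= i < n) (b i - c) + (if (m <= j < n)%N then x else 0).
Proof.
case: ifP => jmn; last first.
  by rewrite addr0; apply: eq_big_nat => i mni; rewrite bump_off //; lia.
apply: (addIr (b j - c)).
rewrite (big_nat_update +%R (F := fun i => b i - c) (G := fun i => bump i - c) jmn).
  by rewrite bump_at /=; ring.
by move=> i ij; rewrite bump_off.
Qed.

Lemma prod_bump m n c : (m <= j < n)%N ->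
  (\prod_(m <= i < n) (bump i - c)) * (b j - c) =
  (b j + x - c) * \prod_(m <= i < n) (b i - c).
Proof.
move=> jmn.
rewrite (big_nat_update *%R (F := fun i => b i - c) (G := fun i => bump i - c) jmn).
  by rewrite bump_at.
by move=> i ij; rewrite bump_off.
Qed.

Lemma prod_bump_out m n c : ~~ (m <= j < n)%N ->
  \prod_(m <= i < n) (bump i - c) = \prod_(m <= i < n) (b i - c).
Proof.
by move=> jmn; apply: eq_big_nat => i imn; rewrite bump_off //; apply: contraNneq jmn => <-.
Qed.

End Bump.

Definition transfer (R : comPzRingType) (b : nat -> R) p q e :=
  bump (bump b p e) q (- e).

Section Transfer.
Variables (R : realFieldType) (d : nat) (b : nat -> R) (p q : nat) (e : R).
Hypotheses (p_gt0 : (0 < p)%N) (pq : (p < q)%N) (qd : (q <= d)%N).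

Let b' := transfer b p q e.

Lemma transfer_p : b' p = b p + e.
Proof. by rewrite /b' /transfer bump_off ?bump_at //; lia. Qed.

Lemma transfer_q : b' q = b q - e.
Proof. by rewrite /b' /transfer bump_at bump_off //; lia. Qed.

Lemma transfer_off i : i != p -> i != q -> b' i = b i.
Proof. by move=> ip iq; rewrite /b' /transfer !bump_off. Qed.

Lemma sum_transfer m n c :
  \sum_(m <= i < n) (b' i - c) = \sum_(m <= i < n) (b i - c)
    + (if (m <= p < n)%N then e else 0) - (if (m <= q < n)%N then e else 0).
Proof. by rewrite /b' /transfer !sum_bump (fun_if -%R) oppr0. Qed.

Lemma prod_transfer_lt n c : (n <= p)%N ->
  \prod_(1 <= i < n) (b' i - c) = \prod_(1 <= i < n) (b i - c).
Proof. by move=> np; rewrite /b' /transfer !prod_bump_out //; lia. Qed.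

Lemma prod_transfer_mid n c : (p < n <= q)%N ->
  (\prod_(1 <= i < n) (b' i - c)) * (b p - c) =
  (b p + e - c) * \prod_(1 <= i < n) (b i - c).
Proof. by move=> pnq; rewrite /b' /transfer prod_bump_out ?prod_bump //; lia. Qed.

Lemma prod_transfer_gt n c : (q < n)%N ->
  (\prod_(1 <= i < n) (b' i - c)) * ((b p - c) * (b q - c)) =
  ((b p + e - c) * (b q - e - c)) * \prod_(1 <= i < n) (b i - c).
Proof.
move=> qn; have p_in : (1 <= p < n)%N by lia.
have q_in : (1 <= q < n)%N by lia.
have := prod_bump (bump b p e) (- e) c q_in; rewrite bump_off; last by lia.
rewrite /b' /transfer (mulrC (b p - c)) mulrA => ->.
by rewrite -mulrA prod_bump //; ring.
Qed.

Lemma transfer_last : b' d.+1 = b d.+1.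
Proof. by rewrite transfer_off //; lia. Qed.

Lemma PS_rhs_transfer t : (t <= d)%N ->
  PS_rhs d b' t = PS_rhs d b t
    + (if (t < p)%N then e else 0) - (if (t < q)%N then e else 0).
Proof.
move=> td; rewrite /PS_rhs transfer_last sum_transfer.
have -> : (t.+1 <= p < d.+2)%N = (t < p)%N by lia.
have -> : (t.+1 <= q < d.+2)%N = (t < q)%N by lia.
ring.
Qed.

Hypotheses (b_feas : feasible d b) (e_gt0 : 0 < e).

Lemma objective_transfer_lt : objective d b' < objective d b.
Proof.
have obj_gt0 : 0 < objective d b.
  rewrite /objective big_nat; apply: prodr_gt0 => i id.
  by apply: (feasible_gt0 b_feas); lia.
have bpq_gt0 : 0 < b p * b q by rewrite mulr_gt0 ?(feasible_gt0 b_feas) //; lia.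
have bq_le_bp : b q <= b p by apply: (feasible_le b_feas); lia.
have qd1 : (q < d.+1)%N by lia.
move: (prod_transfer_gt 0 qd1).
rewrite (eq_bigr b' (fun i _ => subr0 (b' i))) (eq_bigr b (fun i _ => subr0 (b i))) !subr0.
rewrite -/(objective d b') -/(objective d b) => obj_transfer.
rewrite -(ltr_pM2r bpq_gt0) obj_transfer mulrC ltr_pM2l //.
by move: e_gt0; nra.
Qed.

Lemma transfer_le i : i != p -> b' i <= b i.
Proof.
move=> ip; have [->|iq] := eqVneq i q; last by rewrite transfer_off.
by rewrite transfer_q; have := e_gt0; lra.
Qed.

Lemma transfer_ge i : i != q -> b i <= b' i.
Proof.
move=> iq; have [->|ip] := eqVneq i p; last by rewrite transfer_off.
by rewrite transfer_p; have := e_gt0; lra.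
Qed.

Hypotheses (e_le_q : e <= b q - b q.+1) (e_le_p : (1 < p)%N -> e <= b p.-1 - b p).
Hypothesis e_le_slack : forall t, (p <= t < q)%N ->
  e * (PS_lhs d b t + (b p - b d.+1)) <= (b p - b d.+1) * PS_slack d b t.

Lemma transfer_sorted i : (1 <= i <= d)%N -> b' i.+1 <= b' i.
Proof.
case: b_feas => b_sorted _ id.
have [ip|ip] := eqVneq i.+1 p.
  have -> : i = p.-1 by lia.
  rewrite prednK // transfer_p transfer_off; try lia.
  have p_gt1 : (1 < p)%N by lia.
  by have := e_le_p p_gt1; lra.
have [->|iq] := eqVneq i q.
  by rewrite transfer_q transfer_off; try lia; have := e_le_q; lra.
by rewrite (le_trans (transfer_le ip)) // (le_trans (b_sorted _ id)) ?transfer_ge.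
Qed.

Lemma transfer_PS t : (1 <= t <= d)%N -> PS d b' t.
Proof.
move=> /andP[t1 td]; have := feasible_PS b_feas td.
have e_pos := e_gt0; have e_small := e_le_q.
rewrite /PS PS_rhs_transfer // /PS_lhs transfer_last.
have [tp|pt] := ltnP t p.
  have tq : (t < q)%N by lia.
  by rewrite prod_transfer_lt // tq; lra.
have bq_le_bp : b q <= b p by apply: (feasible_le b_feas); lia.
have c_le_q1 : b d.+1 <= b q.+1 by apply: (feasible_le b_feas); lia.
have [tq|qt] := ltnP t q.
  move=> PS_t; have ap_gt0 : 0 < b p - b d.+1 by lra.
  rewrite -(ler_pM2r ap_gt0) prod_transfer_mid; last by lia.
  have pt_q : (p <= t < q)%N by lia.
  by move: (e_le_slack pt_q); rewrite /PS_slack /PS_lhs; nra.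
move=> PS_t; rewrite !subr0 addr0.
have apq_gt0 : 0 < (b p - b d.+1) * (b q - b d.+1) by apply: mulr_gt0; lra.
rewrite -(ler_pM2r apq_gt0) prod_transfer_gt; last by lia.
have lhs_ge0 : 0 <= PS_lhs d b t by apply: (PS_lhs_ge0 b_feas); lia.
have shrink : (b p + e - b d.+1) * (b q - e - b d.+1) <=
              (b p - b d.+1) * (b q - b d.+1) by nra.
apply: le_trans (ler_wpM2r lhs_ge0 shrink) _.
by rewrite [X in _ <= X]mulrC ler_pM2l.
Qed.

Lemma transfer_feasible : feasible d b'.
Proof.
case: b_feas => _ [c_ge0 [sum_b _]].
split; [exact: transfer_sorted | split; [by rewrite transfer_last | split]].
- move: (sum_transfer 1 d.+2 0).
  rewrite (eq_bigr b' (fun i _ => subr0 (b' i))) (eq_bigr b (fun i _ => subr0 (b i))).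
  have p_in : (1 <= p < d.+2)%N by lia.
  have q_in : (1 <= q < d.+2)%N by lia.
  by rewrite p_in q_in addrK sum_b.
- exact: transfer_PS.
Qed.

End Transfer.

Section Optimal.
Variables (R : realFieldType) (d : nat) (b : nat -> R).
Hypothesis b_opt : optimal d b.

Lemma optimal_no_slack_run p q : (0 < p < q)%N -> (q <= d)%N ->
  ((1 < p)%N -> b p < b p.-1) -> b q.+1 < b q ->
  ~ (forall s, (p <= s < q)%N -> 0 < PS_slack d b s).
Proof.
move=> /andP[p_gt0 pq] qd p_start q_end slack_gt0; case: b_opt => b_feas b_min.
have bq_le_bp : b q <= b p by apply: (feasible_le b_feas); lia.
have c_le_bq1 : b d.+1 <= b q.+1 by apply: (feasible_le b_feas); lia.
set ap := b p - b d.+1.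
have ap_gt0 : 0 < ap by rewrite /ap; lra.
pose gap := Order.min (b q - b q.+1) (if (1 < p)%N then b p.-1 - b p else 1).
have gap_gt0 : 0 < gap.
  rewrite lt_min subr_gt0 q_end /=; case: ifP => [p_gt1|_]; last exact: ltr01.
  by rewrite subr_gt0 p_start.
have bound_gt0 s : (p <= s < q)%N -> 0 < ap * PS_slack d b s / (PS_lhs d b s + ap).
  move=> psq; rewrite divr_gt0 ?mulr_gt0 ?slack_gt0 //.
  by rewrite ltr_wpDl ?(PS_lhs_ge0 b_feas) //; lia.
have [e [e_gt0 e_le_gap] e_le_bound] := exists_pos_minorant gap_gt0 bound_gt0.
have e_le_q : e <= b q - b q.+1 by move: e_le_gap; rewrite le_min => /andP[].
have e_le_p : (1 < p)%N -> e <= b p.-1 - b p.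
  by move=> p_gt1; move: e_le_gap; rewrite le_min p_gt1 => /andP[].
have e_le_slack s : (p <= s < q)%N ->
    e * (PS_lhs d b s + ap) <= ap * PS_slack d b s.
  move=> psq; rewrite -ler_pdivlMr ?e_le_bound //.
  by rewrite ltr_wpDl ?(PS_lhs_ge0 b_feas) //; lia.
have := b_min _ (transfer_feasible p_gt0 pq qd b_feas e_gt0 e_le_q e_le_p e_le_slack).
by rewrite leNgt objective_transfer_lt.
Qed.

Lemma optimal_PS_tight t : (1 <= t)%N -> (t < d)%N -> b d.+1 < b t.+1 ->
  PS_lhs d b t = PS_rhs d b t.
Proof.
move=> t1 td c_lt_bt1; case: (b_opt) => b_feas _.
have PS_t : PS_lhs d b t <= PS_rhs d b t by apply: (feasible_PS b_feas); lia.
apply/eqP; rewrite eq_le PS_t /= leNgt; apply/negP; rewrite -subr_gt0 => slack_t.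
have [p [pt p_start b_left]] : exists p, [/\ (1 <= p <= t)%N,
    (1 < p)%N -> b p < b p.-1 & forall i, (p <= i <= t)%N -> b i = b t].
  by apply: (feasible_block_start b_feas); lia.
have [q [tq q_end b_right]] : exists q, [/\ (t.+1 <= q <= d)%N,
    b q.+1 < b q & forall i, (t.+1 <= i <= q)%N -> b i = b q].
  by apply: (feasible_block_end b_feas) => //; lia.
apply: (optimal_no_slack_run _ _ p_start q_end); try lia.
by apply: (PS_slack_gt0_blocks b_feas pt _ b_left b_right slack_t); lia.
Qed.

End Optimal.

Theorem lemma3p1 (R : realType) (d : nat) (hd : (1 <= d)%N) (b : nat -> R)
  (hopt : optimal d b) :
  exists l : nat, (l <= d)%N /\
    (forall t, (l.+1 <= t <= d)%N -> b t = b t.+1) /\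
    (forall t, (1 <= t <= l.-1)%N -> PS_lhs d b t = PS_rhs d b t).
Proof.
have [m [/andP[m1 md] b_plateau c_lt_b]] := feasible_plateau hopt.1.
exists m.-1; split; first by lia.
split => t /andP[mt td].
- by rewrite !b_plateau //; lia.
- by apply: optimal_PS_tight; rewrite ?c_lt_b //; lia.
Qed.
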